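(* Let $G$ be an undirected graph on $n$ vertices that is $\epsilon$-close to being connected, let $K$ be a positive integer and $\delta\in(0,1)$. For each vertex $v$, let $C(v)$ be its connected component and fix (independently of any randomness) a set $U(v)\subseteq C(v)$ with $v\in U(v)$, such that $U(v)=C(v)$ if $|C(v)|<K$ and $|U(v)|=K$ otherwise (for example, the first $K$ vertices visited by a breadth-first search from $v$). Assign to each vertex $v$ an independent uniformly random rank $r(v)\in(0,1]$, and call $v$ special if $r(v)<r(u)$ for all $u\in U(v)\setminus\{v\}$. Then with probability at least $1-\delta$, the number of special vertices is at most $\frac{n}{\delta K}+\epsilon m+1$.
   Context: $m$ is a fixed upper bound on the number of edges. $\mathrm{dist}(G_1,G_2)$ is the number of unordered vertex pairs that are an edge in exactly one graph, divided by $m$; $G$ is $\epsilon$-close to being connected if some connected graph $G'$ on the same vertex set has $\mathrm{dist}(G,G')\le\epsilon$. *)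

From HB Require Import structures.
From mathcomp Require Import all_boot all_order all_algebra.
Set Implicit Arguments. Unset Strict Implicit. Unset Printing Implicit Defensive.
Import Order.TTheory GRing.Theory Num.Theory.
Local Open Scope ring_scope.

Definition simple_graph (T : finType) (e : rel T) : Prop :=
  symmetric e /\ irreflexive e.

(* Number of ordered pairs (x,y) with e x y; for a simple graph this is
   twice the number of edges. *)
Definition ord_edge_count (T : finType) (e : rel T) : nat :=
  #|[set p : T * T | e p.1 p.2]|.

(* Number of ordered pairs on which e and e' disagree: twice the number of
   unordered pairs that are an edge in exactly one graph (for simple graphs). *)
Definition ord_diff_count (T : finType) (e e' : rel T) : nat :=
  #|[set p : T * T | e p.1 p.2 != e' p.1 p.2]|.

Definition gdist (R : realFieldType) (m : nat) (T : finType) (e e' : rel T) : R :=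
  ((ord_diff_count e e')%:R / 2%:R) / m%:R.

Definition connected_graph (T : finType) (e : rel T) : Prop :=
  forall x y : T, connect e x y.

Definition eps_close_connected (R : realFieldType) (m : nat) (T : finType)
    (e : rel T) (eps : R) : Prop :=
  exists e' : rel T, simple_graph e' /\ connected_graph e' /\ gdist R m e e' <= eps.

Definition comp (T : finType) (e : rel T) (v : T) : {set T} :=
  [set u | connect e v u].

Definition admissible_U (T : finType) (e : rel T) (K : nat) (U : T -> {set T}) : Prop :=
  forall v : T,
    [/\ v \in U v, U v \subset comp e v,
        (#|comp e v| < K)%N -> U v = comp e v
      & (K <= #|comp e v|)%N -> #|U v| = K].

(* Ranks: an injective map r : T -> 'I_#|T|, i.e. a uniformly random strict
   total order on the vertices. v is special if r v < r u for
   all u in U(v) \ {v}. *)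
Definition special (T : finType) (U : T -> {set T}) (r : {ffun T -> 'I_#|T|}) (v : T) : bool :=
  [forall u in U v :\ v, (r v < r u)%N].

Definition num_special (T : finType) (U : T -> {set T}) (r : {ffun T -> 'I_#|T|}) : nat :=
  #|[set v | special U r v]|.

Definition rank_prob (R : realFieldType) (T : finType) (P : {ffun T -> 'I_#|T|} -> bool) : R :=
  #|[set r : {ffun T -> 'I_#|T|} | injectiveb r && P r]|%:R /
  #|[set r : {ffun T -> 'I_#|T|} | injectiveb r]|%:R.

From Pilot Require Import Defs.
From HB Require Import structures.
From mathcomp Require Import all_boot all_order all_algebra perm.
From mathcomp Require Import zify lra.
Import Order.TTheory GRing.Theory Num.Theory.
Set Implicit Arguments. Unset Strict Implicit. Unset Printing Implicit Defensive.

(* Special vertices in components of size at least K are rare: such a vertex v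
   is special exactly when it has the smallest rank among the K vertices of
   U(v), which by symmetry happens for at most a 1/K fraction of the rankings.
   So their expected number is at most n/K, and by Markov's inequality it
   exceeds n/(delta K) with probability at most delta.  In a component of size
   less than K we have U(v) = C(v), so at most one vertex per such component is
   special.  Finally G has at most eps m + 1 components: take a connected G'
   differing from G on at most eps m pairs and a root; in every component not
   containing the root, the vertex closest to the root in G' is entered by a
   G'-edge from a strictly closer vertex, and that edge is missing from G.
   Orienting these edges by distance makes them and their reverses pairwise
   distinct ordered pairs. *)

Lemma card_oriented_pairs (T : finType) (D I : {set T * T}) (h : T -> nat) :
  {in I, forall p, [&& p \in D, (p.2, p.1) \in D & h p.1 < h p.2]} ->
  (2 * #|I| <= #|D|)%N.
Proof.
move=> oriented; pose J := [set (p.2, p.1) | p in I].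
have cardJ : #|J| = #|I| by rewrite card_imset // => [[a b] [c d]] [-> ->].
have IJ0 : I :&: J = set0.
  apply/setP => p; rewrite !inE; apply/negP => /andP[pI /imsetP[q qI pq]].
  have /and3P[_ _ hp] := oriented p pI; have /and3P[_ _ hq] := oriented q qI.
  by move: hp; rewrite pq /= ltnNge ltnW.
have IJ_D : I :|: J \subset D.
  rewrite subUset; apply/andP; split; apply/subsetP.
    by move=> p /oriented /and3P[].
  by move=> _ /imsetP[q /oriented /and3P[_ ? _] ->].
by rewrite mul2n -addnn -{2}cardJ -cardsUI IJ0 cards0 addn0 subset_leq_card.
Qed.

Definition separated (T : finType) (e : rel T) (S : {set T}) : Prop :=
  {in S &, forall s t, connect e s t -> s = t}.

Section ComponentsVersusDistance.

Variables (T : finType) (e e' : rel T) (root : T).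
Hypotheses (e_sym : symmetric e) (e'_sym : symmetric e').
Hypothesis e'_conn : connected_graph e'.

Definition has_path_of_size (y : T) (n : nat) : bool :=
  [exists p : n.-tuple T, path e' root p && (last root p == y)].

Lemma has_path_to (y : T) : exists n, has_path_of_size y n.
Proof.
have /connectP[p p_path ->] := e'_conn root y.
by exists (size p); apply/existsP; exists (in_tuple p); rewrite /= p_path eqxx.
Qed.

Definition dist (y : T) : nat := ex_minn (has_path_to y).

Lemma dist_le (y : T) (n : nat) : has_path_of_size y n -> (dist y <= n)%N.
Proof. by rewrite /dist; case: ex_minnP => k _; apply. Qed.

Lemma exists_closer_neighbor (y : T) :
  y != root -> exists2 w, e' w y & (dist w < dist y)%N.
Proof.
rewrite /dist; case: ex_minnP => n /existsP[[p /= /eqP size_p]] /andP[p_path /eqP <-] _.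
case/lastP: p p_path size_p => [|q z] /=; first by rewrite eqxx.
rewrite rcons_path last_rcons size_rcons => /andP[q_path ez] <-.
exists (last root q) => //; apply: (@leq_ltn_trans (size q)) => //.
by apply: dist_le; apply/existsP; exists (in_tuple q); rewrite /= q_path eqxx.
Qed.

Definition parent (y : T) : T := odflt y [pick w | e' w y && (dist w < dist y)%N].

Lemma parentP (y : T) : y != root -> e' (parent y) y && (dist (parent y) < dist y)%N.
Proof.
move=> y_root; rewrite /parent; case: pickP => [w -> //|none].
by have [w ew dw] := exists_closer_neighbor y_root; move: (none w); rewrite ew dw.
Qed.

Definition closest (s : T) : T := [arg min_(u < s | u \in Defs.comp e s) dist u].

Lemma closestP (s : T) :
  closest s \in Defs.comp e s /\
  {in Defs.comp e s, forall u, (dist (closest s) <= dist u)%N}.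
Proof. by rewrite /closest; case: arg_minnP; rewrite ?inE ?connect0. Qed.

Lemma parent_closest_cut (s : T) : ~~ connect e s root ->
  [/\ e' (parent (closest s)) (closest s), ~~ e (parent (closest s)) (closest s)
    & (dist (parent (closest s)) < dist (closest s))%N].
Proof.
move=> s_root; have [c_comp c_min] := closestP s.
have c_root : closest s != root by apply: contraNneq s_root => <-; rewrite inE in c_comp.
have /andP[e'pc dpc] := parentP c_root; split=> //; apply/negP => epc.
have : parent (closest s) \in Defs.comp e s.
  by rewrite inE in c_comp; rewrite inE (connect_trans c_comp) // connect1 // e_sym epc.
by move/c_min; rewrite leqNgt dpc.
Qed.

Lemma card_separated_rooted (S : {set T}) : root \in S -> separated e S ->
  (2 * #|S| <= ord_diff_count e e' + 2)%N.
Proof.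
move=> rootS sepS; pose f s := (parent (closest s), closest s).
have f_inj : {in S :\ root &, injective f}.
  move=> s t /setD1P[_ sS] /setD1P[_ tS] [_ cst]; apply: sepS => //.
  have [cs _] := closestP s; have [ct _] := closestP t.
  rewrite inE in cs; rewrite inE -cst (sym_connect_sym e_sym) in ct.
  exact: connect_trans cs ct.
have cut s : s \in S :\ root -> ~~ connect e s root.
  case/setD1P=> s_root sS; apply: contra s_root => /sepS -> //.
have oriented : {in [set f s | s in S :\ root], forall p,
    [&& p \in [set p : T * T | e p.1 p.2 != e' p.1 p.2], (p.2, p.1) \in
        [set p : T * T | e p.1 p.2 != e' p.1 p.2] & (dist p.1 < dist p.2)%N]}.
  move=> _ /imsetP[s /cut /parent_closest_cut[e'pc epc dpc] ->].
  by rewrite !inE /= (e_sym (closest s)) (e'_sym (closest s)) e'pc (negPf epc) dpc.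
have := card_oriented_pairs oriented.
rewrite card_in_imset // /ord_diff_count (cardsD1 root S) rootS /=.
by rewrite mulnDr addnC leq_add2r; apply.
Qed.

End ComponentsVersusDistance.

Lemma card_separated_diff (T : finType) (e e' : rel T) (S : {set T}) :
  symmetric e -> symmetric e' -> connected_graph e' -> separated e S ->
  (2 * #|S| <= ord_diff_count e e' + 2)%N.
Proof.
move=> e_sym e'_sym e'_conn sepS.
have [->|[root rootS]] := set_0Vmem S; first by rewrite cards0.
exact: (card_separated_rooted e_sym e'_sym e'_conn rootS sepS).
Qed.

Local Open Scope ring_scope.

Lemma card_separated_close (R : realFieldType) (T : finType) (e : rel T) (m : nat)
    (eps : R) (S : {set T}) :
  symmetric e -> (0 < m)%N -> eps_close_connected m e eps -> separated e S ->
  #|S|%:R <= eps * m%:R + 1.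
Proof.
move=> e_sym m_gt0 [e' [[e'_sym _] [e'_conn +]]] sepS.
rewrite /gdist ler_pdivrMr ?ltr0n // => diff_le.
have := card_separated_diff e_sym e'_sym e'_conn sepS.
rewrite -(ler_nat R) natrD natrM; lra.
Qed.

Lemma sum_card_exchange (I J : finType) (A : {pred I}) (B : {pred J}) (P : I -> J -> bool) :
  \sum_(i in A) #|[set j in B | P i j]| = \sum_(j in B) #|[set i in A | P i j]|.
Proof.
have card_sum (X : finType) (C Q : pred X) :
    #|[set x in C | Q x]| = \sum_(x in C) (Q x : nat).
  by rewrite -sum1_card big_mkcond [RHS]big_mkcond; apply: eq_bigr => x _; rewrite !inE;
     case: (x \in C); case: (Q x).
under eq_bigr do rewrite card_sum; rewrite exchange_big.
by apply: eq_bigr => j _; rewrite card_sum.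
Qed.

Section Rankings.

Variable T : finType.
Local Notation ranking := {ffun T -> 'I_#|T|}.

Definition rankings : {set ranking} := [set r : ranking | injectiveb r].

Definition min_rank_on (V : {set T}) (v : T) : {set ranking} :=
  [set r in rankings | [forall w in V :\ v, (r v < r w)%N]].

Lemma rankings_gt0 : (0 < #|rankings|)%N.
Proof.
apply/card_gt0P; exists [ffun x => enum_rank x]; rewrite inE.
by apply/injectiveP => x y; rewrite !ffunE; apply: enum_rank_inj.
Qed.

Lemma card_min_rank_on_le (V : {set T}) (u v : T) : u \in V -> v \in V ->
  (#|min_rank_on V u| <= #|min_rank_on V v|)%N.
Proof.
move=> uV vV; pose t := tperm u v.
pose g (r : ranking) : ranking := [ffun x => r (t x)].
have gK : involutive g by move=> r; apply/ffunP => x; rewrite !ffunE tpermK.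
rewrite -(card_imset _ (can_inj gK)); apply/subset_leq_card/subsetP.
move=> _ /imsetP[r + ->]; rewrite !inE => /andP[/injectiveP r_inj /forallP r_min].
apply/andP; split.
  by apply/injectiveP => x y; rewrite !ffunE => /r_inj; apply: perm_inj.
apply/forallP => w; apply/implyP => /setD1P[wv wV]; rewrite !ffunE tpermR.
have tw_u : t w != u by rewrite -[X in _ != X](tpermR u v) (inj_eq perm_inj).
apply: (implyP (r_min (t w))); rewrite !inE tw_u.
by case: tpermP => // ->.
Qed.

Lemma sum_card_min_rank_on (V : {set T}) :
  (\sum_(v in V) #|min_rank_on V v| <= #|rankings|)%N.
Proof.
rewrite /min_rank_on (sum_card_exchange _ _
  (fun v (r : ranking) => [forall w in V :\ v, (r v < r w)%N])).
rewrite -sum1_card; apply: leq_sum => r _; apply/card_le1_eqP => x y.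
rewrite !inE => /andP[xV /forallP x_min] /andP[yV /forallP y_min].
case: (eqVneq x y) => // xy.
have x_lt_y : (r x < r y)%N by apply: (implyP (x_min y)); rewrite !inE eq_sym xy yV.
have y_lt_x : (r y < r x)%N by apply: (implyP (y_min x)); rewrite !inE xy xV.
by have := ltn_trans x_lt_y y_lt_x; rewrite ltnn.
Qed.

Lemma card_min_rank_on (V : {set T}) (v : T) : v \in V ->
  (#|V| * #|min_rank_on V v| <= #|rankings|)%N.
Proof.
move=> vV; rewrite -sum_nat_const; apply: leq_trans (sum_card_min_rank_on V).
by apply: leq_sum => u uV; apply: card_min_rank_on_le.
Qed.

End Rankings.

Lemma card_markov (R : realFieldType) (J : finType) (A : {pred J}) (f : J -> nat)
    (n K : nat) (delta : R) :
  (0 < K)%N -> 0 < delta -> (K * \sum_(j in A) f j <= n * #|A|)%N ->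
  #|[set j in A | n%:R / (delta * K%:R) < (f j)%:R]|%:R <= delta * #|A|%:R.
Proof.
move=> K_gt0 delta_gt0 sum_le; set a := n%:R / _; set B := [set j in A | _].
have [n0 | n_gt0] := posnP n.
  suff -> : B = set0 by rewrite cards0 mulr_ge0 // ltW.
  move: sum_le; rewrite n0 leqn0 muln_eq0 (gtn_eqF K_gt0) sum_nat_eq0 => /forall_inP f0.
  apply/setP => j; rewrite !inE /a n0 mul0r.
  by case: (boolP (j \in A)) => //= /f0 /eqP ->; rewrite ltxx.
have markov : #|B|%:R * a <= \sum_(j in A) (f j)%:R.
  rewrite (bigID (fun j => a < (f j)%:R)) /= -[X in X <= _]addr0 lerD ?sumr_ge0 //.
  rewrite mulr_natl -sumr_const; under [X in X <= _]eq_bigl do rewrite inE.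
  by apply: ler_sum => j /andP[_ /ltW].
have sum_leR : K%:R * \sum_(j in A) (f j)%:R <= n%:R * #|A|%:R :> R.
  by rewrite -natr_sum -!natrM ler_nat.
have a_def : a * (delta * K%:R) = n%:R.
  by rewrite /a mulfVK // mulf_neq0 // ?pnatr_eq0 -?lt0n ?gt_eqF.
have n_pos : (0 : R) < n%:R by rewrite ltr0n.
have K_pos : (0 : R) < K%:R by rewrite ltr0n.
rewrite -(ler_pM2r n_pos) -{1}a_def mulrA.
apply: le_trans (ler_wpM2r _ markov) _; first by rewrite ltW ?mulr_gt0.
nra.
Qed.

Section SpecialVertices.

Variables (T : finType) (e : rel T) (K : nat) (U : T -> {set T}).
Hypothesis admU : admissible_U e K U.

Definition large_comp : {pred T} := [pred v | (K <= #|Defs.comp e v|)%N].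

Lemma sum_card_large_special :
  (K * \sum_(r in rankings T) #|[set v in large_comp | special U r v]|
     <= #|T| * #|rankings T|)%N.
Proof.
rewrite sum_card_exchange big_distrr /=.
apply: (@leq_trans (\sum_(v in large_comp) #|rankings T|)).
  apply: leq_sum => v v_large; have [vU _ _ U_size] := admU v.
  by rewrite -{1}(U_size v_large); apply: card_min_rank_on.
by rewrite sum_nat_const leq_mul2r max_card orbT.
Qed.

Hypothesis e_sym : symmetric e.

Lemma small_special_separated (r : {ffun T -> 'I_#|T|}) :
  separated e [set v | ~~ large_comp v && special U r v].
Proof.
move=> s t; rewrite !inE -!ltnNge.
move=> /andP[s_small /forallP s_min] /andP[t_small /forallP t_min] st.
have [_ _ Us _] := admU s; have [_ _ Ut _] := admU t.
case: (eqVneq s t) => // s_t.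
have s_lt_t : (r s < r t)%N.
  by apply: (implyP (s_min t)); rewrite Us // !inE eq_sym s_t st.
have t_lt_s : (r t < r s)%N.
  by apply: (implyP (t_min s)); rewrite Ut // !inE s_t (sym_connect_sym e_sym) st.
by have := ltn_trans s_lt_t t_lt_s; rewrite ltnn.
Qed.

End SpecialVertices.

Theorem mainTheorem7 (R : realFieldType) (T : finType) (e : rel T) (m : nat)
    (eps delta : R) (K : nat) (U : T -> {set T}) :
  simple_graph e ->
  (0 < m)%N ->
  (ord_edge_count e <= 2 * m)%N ->
  @eps_close_connected R m T e eps ->
  (0 < K)%N ->
  0 < delta < 1 ->
  admissible_U e K U ->
  1 - delta <=
    @rank_prob R T (fun r => (num_special U r)%:R <=
        #|T|%:R / (delta * K%:R) + eps * m%:R + 1).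
Proof.
move=> [e_sym _] m_gt0 _ closeG K_gt0 /andP[delta_gt0 _] admU.
set a := #|T|%:R / _.
pose large_special r := [set v in large_comp e K | special U r v].
pose small_special r := [set v | ~~ large_comp e K v && special U r v].
pose bad := [set r in rankings T | a < #|large_special r|%:R].
have card_bad : #|bad|%:R <= delta * #|rankings T|%:R.
  exact: card_markov K_gt0 delta_gt0 (sum_card_large_special admU).
have good : rankings T :\: bad \subset
    [set r : {ffun T -> 'I_#|T|} |
      injectiveb r && ((num_special U r)%:R <= a + eps * m%:R + 1)].
  apply/subsetP => r; rewrite !inE => /andP[r_good r_inj]; rewrite r_inj /=.
  rewrite r_inj -leNgt in r_good.
  have split_special : (num_special U r <= #|large_special r| + #|small_special r|)%N.
    apply: leq_trans (leq_card_setU _ _).1; apply/subset_leq_card/subsetP => v.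
    by rewrite !inE => ->; rewrite !andbT orbN.
  have := card_separated_close e_sym m_gt0 closeG
    (small_special_separated (r := r) admU e_sym).
  move: split_special; rewrite -(ler_nat R) natrD; lra.
rewrite /rank_prob ler_pdivlMr ?ltr0n ?rankings_gt0 //.
apply: (@le_trans _ _ #|rankings T :\: bad|%:R); last by rewrite ler_nat subset_leq_card.
have bad_sub : bad \subset rankings T by apply/subsetP => r /setIdP[].
by rewrite cardsDS // natrB ?subset_leq_card //; lra.
Qed.
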